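(* For $n\ge 1$ let $\tau$ be a plane increasing binary tree of size $n$ chosen uniformly at random, and let $X_n$ be the number of distinct shapes (unlabeled plane binary trees) among the fringe subtrees of $\tau$, i.e. the size of the compacted tree of $\tau$. Then \[ \mathbb{E}(X_n) = \mathcal{O}\!\left(\frac{n}{\log n}\right) \quad \text{as } n\to\infty . \]
   Context: A plane binary tree is a rooted tree in which every node has a left and a right slot, each of which is either empty or holds a subtree (left and right are distinguished); its size is its number of nodes. A plane increasing binary tree of size $n$ is a plane binary tree with $n$ nodes labeled by the distinct integers $1,\dots,n$ such that labels increase along every path from the root; there are $n!$ of them (this is the random binary search tree model). The shape of such a tree is the unlabeled plane binary tree obtained by forgetting the labels. A fringe subtree is a node together with all its descendants. The compacted tree keeps one copy of each distinct fringe-subtree shape. *)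

From Stdlib Require Import Reals.
From HB Require Import structures.
From mathcomp Require Import all_boot.

Set Implicit Arguments. Unset Strict Implicit. Unset Printing Implicit Defensive.

Inductive bt : Type := bt_empty | bt_node of bt & bt.

Definition bt_eq_dec : forall s t : bt, {s = t} + {s <> t}.
Proof. decide equality. Defined.
Definition bt_eqb (s t : bt) : bool := if bt_eq_dec s t then true else false.
Lemma bt_eqP : Equality.axiom bt_eqb.
Proof. by move=> s t; rewrite /bt_eqb; case: bt_eq_dec => h; constructor. Qed.
HB.instance Definition _ := hasDecEq.Build bt bt_eqP.

Inductive lbt : Type := lbt_empty | lbt_node of lbt & nat & lbt.

Definition lbt_eq_dec : forall s t : lbt, {s = t} + {s <> t}.
Proof. decide equality; exact: PeanoNat.Nat.eq_dec. Defined.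
Definition lbt_eqb (s t : lbt) : bool := if lbt_eq_dec s t then true else false.
Lemma lbt_eqP : Equality.axiom lbt_eqb.
Proof. by move=> s t; rewrite /lbt_eqb; case: lbt_eq_dec => h; constructor. Qed.
HB.instance Definition _ := hasDecEq.Build lbt lbt_eqP.

Fixpoint shape (t : lbt) : bt :=
  match t with
  | lbt_empty => bt_empty
  | lbt_node l _ r => bt_node (shape l) (shape r)
  end.

Fixpoint labels (t : lbt) : seq nat :=
  match t with
  | lbt_empty => [::]
  | lbt_node l a r => labels l ++ a :: labels r
  end.

(* The label of a node is smaller than the labels of its children
   (hence labels increase along every path from the root). *)
Definition root_gt (a : nat) (t : lbt) : bool :=
  match t with lbt_empty => true | lbt_node _ b _ => a < b end.

Fixpoint increasing (t : lbt) : bool :=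
  match t with
  | lbt_empty => true
  | lbt_node l a r => [&& root_gt a l, root_gt a r, increasing l & increasing r]
  end.

Definition incr_tree (n : nat) (t : lbt) : bool :=
  perm_eq (labels t) (iota 1 n) && increasing t.

Fixpoint fringe (t : lbt) : seq lbt :=
  match t with
  | lbt_empty => [::]
  | lbt_node l _ r => t :: (fringe l ++ fringe r)
  end.

Definition compacted_size (t : lbt) : nat :=
  size (undup (map shape (fringe t))).

Definition uniform_mean (s : seq lbt) (X : lbt -> nat) : R :=
  Rdiv (INR (\sum_(t <- s) X t)) (INR (size s)).

(* Fix a threshold m.  The compacted size of a tree is at most the number of
   shapes of size < m, which is at most 4^m (a shape of size k has a
   prefix-free code of 2k + 1 bits), plus the number of fringe subtrees of
   size >= m.  Reading the labels of an increasing tree in order is a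
   bijection onto the permutations of 1..n.  If the subtree rooted at label a
   has size >= 2r + 1, then on one of its sides a is followed by at least r
   larger labels, so a is the minimum of the window of length r + 1 starting
   at a in the in-order word or in its reversal.  By exchanging two positions,
   a window of a uniform permutation has its minimum at its first position
   with probability 1 / (r + 1).  Hence E X_n <= 4^(2r+1) + 2n / (r + 1), and
   r ~ (log_2 n) / 8 gives O(n / log n). *)

From Stdlib Require Import Reals Lra.
From mathcomp Require Import all_boot zify.

Set Implicit Arguments.
Unset Strict Implicit.
Unset Printing Implicit Defensive.

Lemma nth_cat_nseq_default (T : Type) (x0 : T) s k i : nth x0 (s ++ nseq k x0) i = nth x0 s i.
Proof.
by rewrite nth_cat nth_nseq if_same; case: ltnP => // /(nth_default x0)->.
Qed.

Lemma cat_cons_notin_inj (T : eqType) (a : T) x y x' y' :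
  a \notin x -> a \notin x' -> x ++ a :: y = x' ++ a :: y' -> x = x' /\ y = y'.
Proof.
move=> a_x a_x' e; have size_x : size x = size x'.
  by move/(congr1 (index a)): e; rewrite !index_cat (negbTE a_x) (negbTE a_x') /= eqxx !addn0.
by move/eqP: e; rewrite eqseq_cat // eqseq_cons eqxx => /andP[/eqP-> /eqP->].
Qed.

Lemma count_sum (T : Type) (p : pred T) s : count p s = \sum_(x <- s) p x.
Proof. by rewrite -sumn_count sumnE big_map. Qed.

Lemma sum_nat_const_seq (I : Type) (s : seq I) c : \sum_(i <- s) c = size s * c.
Proof. by rewrite big_const_seq count_predT iter_addn_0 mulnC. Qed.

Lemma sum_involution (T : eqType) (Q : seq T) (f : T -> T) (F : T -> nat) :
  uniq Q -> {in Q, forall w, f w \in Q} -> {in Q, forall w, f (f w) = w} ->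
  \sum_(w <- Q) F (f w) = \sum_(w <- Q) F w.
Proof.
move=> uniq_Q f_Q fK; rewrite -(big_map f xpredT F); apply/perm_big/uniq_perm => //.
  by rewrite map_inj_in_uniq // => x y x_Q y_Q fx_fy; rewrite -(fK x) // fx_fy fK.
move=> w; apply/mapP/idP => [[w' w'_Q ->]|w_Q]; first exact: f_Q.
by exists (f w); rewrite ?f_Q ?fK.
Qed.

(** * Shapes and the compacted size *)

Fixpoint bsize (t : bt) : nat :=
  match t with bt_empty => 0 | bt_node l r => (bsize l + bsize r).+1 end.

Fixpoint bt_code (t : bt) : seq bool :=
  match t with bt_empty => [:: false] | bt_node l r => true :: bt_code l ++ bt_code r end.

Lemma bt_code_prefix t t' x y : bt_code t ++ x = bt_code t' ++ y -> t = t' /\ x = y.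
Proof.
elim: t t' x y => [|l IHl r IHr] [|l' r'] x y //=; first by case.
by case; rewrite -!catA => /IHl [-> /IHr [-> ->]].
Qed.

Lemma size_bt_code t : size (bt_code t) = (bsize t).*2.+1.
Proof. by elim: t => [|l IHl r IHr] //=; rewrite size_cat IHl IHr; lia. Qed.

(* A shape of size < m is determined by the first 2m bits of its prefix-free code. *)
Lemma card_shapes_lt m (S : seq bt) : uniq S -> {in S, forall t, bsize t < m} -> size S <= 2 ^ m.*2.
Proof.
move=> uniq_S small.
pose f t := [ffun i : 'I_m.*2 => nth false (bt_code t) i].
pose pad t := bt_code t ++ nseq (m.*2 - size (bt_code t)) false.
have size_pad t : t \in S -> size (pad t) = m.*2.
  by move=> /small lt_t_m; rewrite size_cat size_nseq size_bt_code; lia.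
have f_inj : {in S &, injective f}.
  move=> t t' St St' ft; suff /bt_code_prefix[] : pad t = pad t' by [].
  apply: (@eq_from_nth _ false); rewrite ?size_pad // => i lt_i.
  move/ffunP/(_ (Ordinal lt_i)): ft.
  by rewrite !ffunE !nth_cat_nseq_default.
rewrite -(size_map f) -(card_uniqP _); last by rewrite map_inj_in_uniq.
by apply: leq_trans (max_card _) _; rewrite card_ffun card_bool card_ord.
Qed.

Lemma bsize_shape t : bsize (shape t) = size (labels t).
Proof. by elim: t => [|l IHl a r IHr] //=; rewrite size_cat /= IHl IHr addnS. Qed.

Definition large_fringe m t := count (fun u => m <= size (labels u)) (fringe t).

Lemma compacted_size_le m t : compacted_size t <= 2 ^ m.*2 + large_fringe m t.
Proof.
rewrite /compacted_size -(count_predC (fun u => bsize u < m)) leq_add //.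
  rewrite -size_filter card_shapes_lt ?filter_uniq ?undup_uniq //.
  by move=> u; rewrite mem_filter => /andP[].
apply: leq_trans (count_undup _ _) _; rewrite count_map.
by apply: sub_count => u /=; rewrite bsize_shape -leqNgt.
Qed.

(** * Increasing trees and their in-order words *)

Lemma increasing_labels_gt a t :
  increasing t -> root_gt a t -> all (fun x => a < x) (labels t).
Proof.
elim: t a => [|l IHl b r IHr] a //= /and4P[b_l b_r incr_l incr_r] lt_ab.
rewrite all_cat /= lt_ab; apply/andP; split; apply/allP => x.
  by move/(allP (IHl b incr_l b_l)); apply: ltn_trans.
by move/(allP (IHr b incr_r b_r)); apply: ltn_trans.
Qed.

Lemma root_gt_labels a t : all (fun x => a < x) (labels t) -> root_gt a t.
Proof. by case: t => //= l b r; rewrite all_cat /= => /and3P[]. Qed.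

Lemma increasing_root_le l a r x :
  increasing (lbt_node l a r) -> x \in labels (lbt_node l a r) -> a <= x.
Proof.
case/and4P=> a_l a_r incr_l incr_r; rewrite /= mem_cat inE.
case/or3P=> [x_l | /eqP-> // | x_r]; apply: ltnW.
  exact: (allP (increasing_labels_gt incr_l a_l)).
exact: (allP (increasing_labels_gt incr_r a_r)).
Qed.

Lemma increasing_labels_inj t1 t2 : increasing t1 -> increasing t2 ->
  uniq (labels t1) -> labels t1 = labels t2 -> t1 = t2.
Proof.
elim: t1 t2 => [|l IHl a r IHr] [|l' a' r'] //;
  try by move=> _ _ _ /(congr1 size); rewrite /= size_cat /= addnS.
move=> incr incr' uniq_w e; have a_a' : a = a'.
  apply: anti_leq; rewrite (increasing_root_le incr) ?(increasing_root_le incr') //.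
    by rewrite -e /= mem_cat mem_head orbT.
  by rewrite e /= mem_cat mem_head orbT.
subst a'; move: uniq_w (uniq_w); rewrite {2}e /= !cat_uniq /= !negb_or.
case/and4P=> uniq_l /andP[a_l _] _ uniq_r /and3P[_ /andP[a_l' _] _].
case: (cat_cons_notin_inj a_l a_l' e) => e_l e_r.
case/and4P: incr => _ _ incr_l incr_r; case/and4P: incr' => _ _ incr_l' incr_r'.
by rewrite (IHl l' incr_l incr_l' uniq_l e_l) (IHr r' incr_r incr_r' uniq_r e_r).
Qed.

(* The minimum of [w] becomes the root; the parts of [w] on either side of it
   become the two subtrees. *)
Lemma increasing_tree_of_uniq w : uniq w -> exists2 t, increasing t & labels t = w.
Proof.
have [n] := ubnP (size w); elim: n w => // n IHn w lt_w_n uniq_w.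
case: (altP (w =P [::])) => [-> | w_nonempty]; first by exists lbt_empty.
have exists_mem : exists a, a \in w.
  by case: w w_nonempty {lt_w_n uniq_w} => // x w' _; exists x; rewrite mem_head.
case: (ex_minnP exists_mem) => a a_w min_a; move: lt_w_n uniq_w min_a.
case/splitPr: a_w => wl wr; rewrite size_cat /= => lt_w_n uniq_w min_a.
move: (uniq_w); rewrite cat_uniq /= negb_or => /and3P[uniq_l /andP[a_l _] /andP[a_r uniq_r]].
have gt_a wx : {subset wx <= wl ++ a :: wr} -> a \notin wx -> all (fun z => a < z) wx.
  move=> sub_w a_wx; apply/allP => z z_wx; rewrite ltn_neqAle min_a ?sub_w // andbT.
  by apply: contraNneq a_wx => ->.
rewrite ltnS addnS in lt_w_n.
have [tl incr_l w_l] := IHn wl (leq_ltn_trans (leq_addr _ _) lt_w_n) uniq_l.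
have [tr incr_r w_r] := IHn wr (leq_ltn_trans (leq_addl _ _) lt_w_n) uniq_r.
exists (lbt_node tl a tr); last by rewrite /= w_l w_r.
rewrite /= incr_l incr_r !root_gt_labels ?w_l ?w_r ?gt_a //;
  by move=> z z_w; rewrite mem_cat inE z_w ?orbT.
Qed.

(** * Windows whose minimum is at their head *)

Section WindowMinima.

Variable r : nat.

Definition window_min (w : seq nat) i j :=
  all (fun k => (k == j) || (nth 0 w (i + j) < nth 0 w (i + k))) (iota 0 r.+1).

Definition head_min w i := (i + r < size w) && window_min w i 0.

Definition head_mins w := count (head_min w) (iota 0 (size w)).

Lemma head_mins_cat_eq x y :
  head_mins (x ++ y) = count (head_min (x ++ y)) (iota 0 (size x)) + head_mins y.
Proof.
rewrite /head_mins size_cat iotaD count_cat add0n -[size x]addn0 iotaDl count_map addn0.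
congr (_ + _); apply: eq_count => i /=.
rewrite /head_min /window_min size_cat; congr (_ && _); first by rewrite -addnA ltn_add2l.
by apply: eq_all => k; rewrite !nth_cat -!addnA !ltnNge !leq_addr /= !addKn.
Qed.

Lemma head_mins_cat x y : head_mins x + head_mins y <= head_mins (x ++ y).
Proof.
rewrite head_mins_cat_eq leq_add2r; apply: sub_count => i /andP[lt_ir /allP min_i].
rewrite /head_min size_cat ltn_addr //=; apply/allP => k k_r.
have le_k_r : k <= r by move: k_r; rewrite mem_iota; lia.
have [lt_i_x lt_ik_x] : i + 0 < size x /\ i + k < size x by lia.
by rewrite !nth_cat lt_i_x lt_ik_x min_i.
Qed.

Lemma head_mins_cons a y :
  all (fun z => a < z) y -> (r <= size y) + head_mins y <= head_mins (a :: y).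
Proof.
move=> /allP gt_a; rewrite -cat1s head_mins_cat_eq leq_add2r /= addn0.
case: (leqP r (size y)) => //= le_r_y; rewrite /head_min add0n ltnS le_r_y lt0b.
apply/allP => -[|k] //; rewrite mem_iota add0n ltnS => /andP[_ lt_k_r] /=.
exact/gt_a/mem_nth/(leq_trans lt_k_r).
Qed.

End WindowMinima.

Lemma window_min_unique r w i : count (window_min r w i) (iota 0 r.+1) <= 1.
Proof.
case: (altP (@hasP _ (window_min r w i) (iota 0 r.+1))) => [[j j_r min_j] | no_min].
  2: by rewrite leqW // leqn0 eqn0Ngt -has_count.
rewrite -size_filter (@uniq_leq_size _ _ [:: j]) ?filter_uniq ?iota_uniq // => k.
rewrite mem_filter inE => /andP[min_k k_r].
have := allP min_j k k_r; have := allP min_k j j_r; rewrite eq_sym.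
by case: eqP => //= _ /ltn_trans lt_jj /lt_jj; rewrite ltnn.
Qed.

Lemma large_fringe_le_head_mins r t : increasing t ->
  large_fringe r.*2.+1 t <= head_mins r (labels t) + head_mins r (rev (labels t)).
Proof.
elim: t => [|l IHl a rt IHr] //= /and4P[a_l a_rt incr_l incr_rt].
rewrite /large_fringe /= count_cat -/(large_fringe _ l) -/(large_fringe _ rt) size_cat /=.
rewrite rev_cat rev_cons -cats1 -catA cat1s.
have cons_r := head_mins_cons r (increasing_labels_gt incr_rt a_rt).
have cons_l : (r <= size (labels l)) + head_mins r (rev (labels l))
    <= head_mins r (a :: rev (labels l)).
  by rewrite -size_rev; apply: head_mins_cons; rewrite all_rev increasing_labels_gt.
have cat_lr := head_mins_cat r (labels l) (a :: labels rt).
have cat_rl := head_mins_cat r (rev (labels rt)) (a :: rev (labels l)).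
have := IHl incr_l; have := IHr incr_rt.
have split_large : (r.*2.+1 <= size (labels l) + (size (labels rt)).+1)
    <= (r <= size (labels l)) + (r <= size (labels rt)).
  by case: (leqP r (size (labels l))); case: (leqP r (size (labels rt))); case: leqP => //=; lia.
lia.
Qed.

(** * Averaging over a family of words closed under transpositions *)

Definition transp (i j k : nat) : nat := if k == i then j else if k == j then i else k.

Definition swap i j (w : seq nat) := mkseq (fun k => nth 0 w (transp i j k)) (size w).

Lemma transpK i j : involutive (transp i j).
Proof.
move=> k; rewrite /transp.
case: (eqVneq k i) => [->|ne_ki]; first by rewrite eqxx; case: eqVneq.
by case: (eqVneq k j) => [->|ne_kj]; rewrite ?eqxx // (negbTE ne_ki) (negbTE ne_kj).
Qed.

Lemma transp_lt i j k n : i < n -> j < n -> k < n -> transp i j k < n.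
Proof. by rewrite /transp; do 2?case: ifP. Qed.

Lemma perm_iota_transp i j n : i < n -> j < n -> perm_eq (map (transp i j) (iota 0 n)) (iota 0 n).
Proof.
move=> lt_i lt_j; apply: uniq_perm; rewrite ?map_inj_uniq ?iota_uniq //.
  exact: can_inj (transpK i j).
move=> k; rewrite mem_iota add0n /=; apply/mapP/idP => [[k' + ->]|lt_k].
  by rewrite mem_iota add0n /=; apply: transp_lt.
by exists (transp i j k); rewrite ?transpK // mem_iota add0n /= transp_lt.
Qed.

Lemma transp_addn i j k : transp i (i + j) (i + k) = i + transp 0 j k.
Proof.
rewrite /transp eqn_add2l -{2}[i]addn0 eqn_add2l.
by case: (k == 0); case: (k == j); rewrite ?addn0.
Qed.

Lemma size_swap i j w : size (swap i j w) = size w.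
Proof. exact: size_mkseq. Qed.

Lemma nth_swap i j w k : k < size w -> nth 0 (swap i j w) k = nth 0 w (transp i j k).
Proof. exact: nth_mkseq. Qed.

Lemma swapK i j w : i < size w -> j < size w -> swap i j (swap i j w) = w.
Proof.
move=> lt_i lt_j; apply: (@eq_from_nth _ 0); rewrite !size_swap // => k lt_k.
by rewrite nth_swap ?size_swap // nth_swap ?transpK // transp_lt.
Qed.

Lemma perm_swap i j w : i < size w -> j < size w -> perm_eq (swap i j w) w.
Proof.
move=> lt_i lt_j; rewrite -[in X in perm_eq _ X](mkseq_nth 0 w) /swap /mkseq.
by rewrite (map_comp (nth 0 w) (transp i j)) perm_map // perm_iota_transp.
Qed.

Lemma window_min_swap r w i j : i + r < size w -> j <= r ->
  window_min r (swap i (i + j) w) i 0 = window_min r w i j.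
Proof.
move=> lt_ir le_jr; have lt_0r := ltn0Sn r.
have nth_shift m : m < r.+1 -> nth 0 (swap i (i + j) w) (i + m) = nth 0 w (i + transp 0 j m).
  by move=> lt_m; rewrite -transp_addn nth_swap //; apply: leq_ltn_trans lt_ir; lia.
rewrite /window_min -(perm_all _ (perm_iota_transp lt_0r le_jr)) all_map.
apply: eq_in_all => k; rewrite mem_iota add0n /= => lt_k.
have lt_tk : transp 0 j k < r.+1 by apply: transp_lt.
have t0 : transp 0 j 0 = j by rewrite /transp eqxx.
have tj : transp 0 j j = 0 by rewrite /transp eqxx; case: (eqVneq j 0).
by rewrite !nth_shift // transpK t0 -[X in _ == X]tj (can_eq (transpK 0 j)).
Qed.

Section SwapClosedFamily.

Variables (n : nat) (Q : seq (seq nat)).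
Hypotheses (uniq_Q : uniq Q) (size_Q : {in Q, forall w, size w = n})
  (swap_Q : forall w i j, w \in Q -> i < n -> j < n -> swap i j w \in Q).

(* Swapping positions [i] and [i + j] is an involution of [Q] that moves the
   minimum of the window at [i] from offset [j] to offset [0]. *)
Lemma sum_head_min r i : r.+1 * \sum_(w <- Q) head_min r w i <= size Q.
Proof.
have [lt_ir | le_n_ir] := ltnP (i + r) n; last first.
  by rewrite big_seq big1 ?muln0 // => w w_Q; rewrite /head_min size_Q // ltnNge le_n_ir.
have -> : \sum_(w <- Q) head_min r w i = \sum_(w <- Q) window_min r w i 0.
  by apply: eq_big_seq => w w_Q; rewrite /head_min size_Q ?lt_ir.
have sum_window_min j : j \in iota 0 r.+1 ->
    \sum_(w <- Q) window_min r w i j = \sum_(w <- Q) window_min r w i 0.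
  rewrite mem_iota add0n ltnS => le_jr.
  rewrite -(@sum_involution _ Q (swap i (i + j)) (fun w => window_min r w i 0) uniq_Q).
  - by apply: eq_big_seq => w w_Q; rewrite window_min_swap ?size_Q.
  - by move=> w w_Q; apply: swap_Q => //; lia.
  - by move=> w w_Q; rewrite swapK ?size_Q //; lia.
rewrite -[r.+1](size_iota 0) -sum_nat_const_seq -(eq_big_seq _ sum_window_min).
rewrite exchange_big /= -sum1_size; apply: leq_sum => w _.
by rewrite -count_sum window_min_unique.
Qed.

Lemma sum_head_mins r : r.+1 * \sum_(w <- Q) head_mins r w <= n * size Q.
Proof.
rewrite (eq_big_seq (fun w => \sum_(i <- iota 0 n) head_min r w i)); last first.
  by move=> w w_Q; rewrite /head_mins size_Q // count_sum.
rewrite exchange_big big_distrr /=; apply: leq_trans (_ : \sum_(i <- iota 0 n) size Q <= _).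
  by apply: leq_sum => i _; apply: sum_head_min.
by rewrite sum_nat_const_seq size_iota.
Qed.

End SwapClosedFamily.

(** * The expected compacted size *)

Lemma window_exponent_bound k : k.+1 * 2 ^ ((k %/ 8).*2.+1).*2 <= 2 ^ k.+3.
Proof.
have lt_half := ltn_expl (k %/ 2) (ltnSn 1).
apply: leq_trans (_ : 2 ^ (k %/ 2).+1 * 2 ^ ((k %/ 8).*2.+1).*2 <= _).
  by rewrite leq_mul2r expnS; apply/orP; right; lia.
by rewrite -expnD leq_exp2l //; lia.
Qed.

Section IncreasingTreesOfSize.

Variables (n : nat) (s : seq lbt).
Hypotheses (uniq_s : uniq s) (mem_s : forall t, (t \in s) = incr_tree n t).

Lemma mem_map_labels w : (w \in map labels s) = perm_eq w (iota 1 n).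
Proof.
apply/mapP/idP => [[t + ->] | perm_w]; first by rewrite mem_s => /andP[].
have uniq_w : uniq w by rewrite (perm_uniq perm_w) iota_uniq.
have [t incr_t labels_t] := increasing_tree_of_uniq uniq_w.
by exists t; rewrite // mem_s /incr_tree labels_t perm_w.
Qed.

Lemma uniq_map_labels : uniq (map labels s).
Proof.
rewrite map_inj_in_uniq // => t1 t2; rewrite !mem_s => /andP[perm_1 incr_1] /andP[_ incr_2].
by apply: increasing_labels_inj; rewrite // (perm_uniq perm_1) iota_uniq.
Qed.

Lemma sum_compacted_size_le r : r.+1 * \sum_(t <- s) compacted_size t
  <= r.+1 * (2 ^ (r.*2.+1).*2 * size s) + 2 * (n * size s).
Proof.
set Q := map labels s.
have size_Q : {in Q, forall w, size w = n}.
  by move=> w; rewrite mem_map_labels => /perm_size->; rewrite size_iota.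
have swap_Q w i j : w \in Q -> i < n -> j < n -> swap i j w \in Q.
  move=> w_Q lt_i lt_j; move: (w_Q); rewrite !mem_map_labels; apply: perm_trans.
  by apply: perm_swap; rewrite size_Q.
have sum_rev : \sum_(w <- Q) head_mins r (rev w) = \sum_(w <- Q) head_mins r w.
  apply: sum_involution; rewrite ?uniq_map_labels // => w; last by rewrite revK.
  by rewrite !mem_map_labels perm_rev.
have sum_le : \sum_(t <- s) compacted_size t
    <= size s * 2 ^ (r.*2.+1).*2
       + (\sum_(w <- Q) head_mins r w + \sum_(w <- Q) head_mins r (rev w)).
  rewrite -sum_nat_const_seq !big_map -!big_split.
  rewrite big_seq [X in _ <= X]big_seq; apply: leq_sum => t t_s.
  apply: leq_trans (compacted_size_le r.*2.+1 t) _; rewrite leq_add2l.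
  by apply: large_fringe_le_head_mins; move: t_s; rewrite mem_s => /andP[].
have := sum_head_mins uniq_map_labels size_Q swap_Q r; rewrite size_map.
rewrite sum_rev in sum_le => sum_Q; apply: leq_trans (leq_mul (leqnn r.+1) sum_le) _.
by rewrite mulnDr (mulnC (size s)) leq_add2l addnn -mul2n mulnCA leq_mul2l sum_Q orbT.
Qed.

Lemma sum_compacted_size_log : 0 < n ->
  (trunc_log 2 n).+1 * \sum_(t <- s) compacted_size t <= 24 * n * size s.
Proof.
move=> n_gt0; set k := trunc_log 2 n; set r := k %/ 8.
have exp_k : 2 ^ k <= n := trunc_logP (ltnSn 1) n_gt0.
have k_r : k.+1 <= 8 * r.+1 by rewrite /r; lia.
have B_n : k.+1 * 2 ^ (r.*2.+1).*2 <= 8 * n.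
  by apply: leq_trans (window_exponent_bound k) _; rewrite !expnS; lia.
have sum_r := leq_mul (leqnn k.+1) (sum_compacted_size_le r).
have B_r := leq_mul B_n (leqnn (r.+1 * size s)).
have k_n := leq_mul k_r (leqnn (2 * n * size s)).
rewrite -(leq_pmul2l (ltn0Sn r)); move: sum_r B_r k_n.
set X := \sum_(t <- s) _; set B := 2 ^ _; clearbody X B k r; nia.
Qed.

End IncreasingTreesOfSize.

Local Open Scope R_scope.

Lemma INR_expn m k : INR (m ^ k) = INR m ^ k.
Proof. by elim: k => [|k IHk] //; rewrite expnS mult_INR IHk. Qed.

Lemma ln_le_succ_trunc_log n : (0 < n)%N -> ln (INR n) <= INR (trunc_log 2 n).+1.
Proof.
move=> n_gt0; set k := (trunc_log 2 n).+1.
have n_pos : 0 < INR n by apply: (lt_INR 0); apply/ltP.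
have n_lt : INR n < 2 ^ k.
  have -> : 2 ^ k = INR (2 ^ k) by rewrite INR_expn; congr (_ ^ _); rewrite /=; lra.
  by apply/lt_INR/ltP/trunc_log_ltn.
have ln2_lt1 : ln 2 < 1.
  by rewrite -[X in _ < X]ln_exp; apply: ln_increasing; [lra | have := exp_ineq1 1; lra].
have ln2_pos : 0 < ln 2 by rewrite -ln_1; apply: ln_increasing; lra.
have := ln_increasing _ _ n_pos n_lt; rewrite ln_pow; last lra.
have := pos_INR k; nra.
Qed.

Lemma div_le_div_of_mul_le x y a L K : 0 <= x -> 0 <= y -> 0 <= a -> 0 < L <= K ->
  K * x <= a * y -> x / y <= a / L.
Proof.
move=> x_ge0 y_ge0 a_ge0 [L_gt0 le_LK] Kx_le.
have aL_ge0 : 0 <= a / L by apply: Rmult_le_pos => //; apply/Rlt_le/Rinv_0_lt_compat.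
case: (Rle_lt_or_eq_dec 0 y y_ge0) => [y_gt0 | <-]; last by rewrite Rdiv_0_r.
apply: (Rmult_le_reg_r (y * L)); first nra.
have -> : x / y * (y * L) = x * L by field; lra.
have -> : a / L * (y * L) = a * y by field; lra.
nra.
Qed.

Theorem theorem3p9 :
  exists (C : R) (N : nat),
    forall (n : nat), (N <= n)%N ->
    forall (s : seq lbt), uniq s -> (forall t : lbt, (t \in s) = incr_tree n t) ->
      Rle (uniform_mean s compacted_size) (Rmult C (Rdiv (INR n) (ln (INR n)))).
Proof.
exists 24, 2%N => n le_2n s uniq_s mem_s.
have n_gt0 : (0 < n)%N by apply: leq_trans le_2n.
have sum_le := sum_compacted_size_log uniq_s mem_s n_gt0.
have ln_pos : 0 < ln (INR n).
  by rewrite -ln_1; apply: ln_increasing; [lra | apply: (lt_INR 1); apply/ltP].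
rewrite /uniform_mean Rmult_div_assoc; apply: div_le_div_of_mul_le; rewrite -?mult_INR;
  try exact: pos_INR.
- by apply: Rmult_le_pos; [lra | apply: pos_INR].
- by split; last exact: ln_le_succ_trunc_log.
- by rewrite (_ : 24 = INR 24) -?mult_INR; [apply/le_INR/leP | rewrite /INR; lra].
Qed.
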